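(* Let $G$ be a finite simple graph containing a leaf (a vertex of degree one), and let $I=I(G)\subset R=K[V(G)]$ be its edge ideal. Then $\operatorname{Ass}(R/I^t)\subset\operatorname{Ass}(R/I^{t+1})$ for all $t\ge1$; that is, the sets of associated primes of the powers of $I$ form an ascending chain.
   Context: $R=K[x_1,\dots,x_n]$ with $K$ a field and the vertices of $G$ identified with the variables; $I(G)$ is generated by the monomials $x_ix_j$ with $\{x_i,x_j\}$ an edge of $G$. $\operatorname{Ass}(M)$ denotes the set of associated primes of an $R$-module $M$. *)

(* Multivariate polynomial ring K[x_0,...,x_{n-1}] built as
   iterated univariate polynomials K[x_0][x_1]...[x_{n-1}]. *)
From HB Require Import structures.
From mathcomp Require Import all_boot all_order all_algebra.
Set Implicit Arguments. Unset Strict Implicit. Unset Printing Implicit Defensive.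
Import GRing.Theory.
Local Open Scope ring_scope.

Fixpoint mpoly (R : comNzRingType) (n : nat) : comNzRingType :=
  match n with
  | 0 => R
  | n'.+1 => ({poly mpoly R n'} : comNzRingType)
  end.

(* the variable x_i (i < n) of mpoly R n; x_{n-1} is the outermost 'X *)
Fixpoint mvar (R : comNzRingType) (n : nat) : nat -> mpoly R n :=
  match n return nat -> mpoly R n with
  | 0 => fun _ => 0
  | n'.+1 => fun i => if i == n' then ('X : {poly mpoly R n'})
                      else ((mvar R n' i)%:P : {poly mpoly R n'})
  end.

Definition x_ (R : comNzRingType) (n : nat) (i : 'I_n) : mpoly R n := mvar R n i.

Definition ideal_gen (A : comNzRingType) (S : A -> Prop) : A -> Prop :=
  fun f => exists s : seq (A * A),
    (forall p, p \in s -> S p.2) /\ f = \sum_(p <- s) p.1 * p.2.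

Fixpoint prods (A : comNzRingType) (S : A -> Prop) (t : nat) : A -> Prop :=
  match t with
  | 0 => fun g => g = 1
  | t'.+1 => fun g => exists a b, S a /\ prods S t' b /\ g = a * b
  end.

Definition ideal_pow (A : comNzRingType) (I : A -> Prop) (t : nat) : A -> Prop :=
  ideal_gen (prods I t).

Definition prime_ideal (A : comNzRingType) (P : A -> Prop) : Prop :=
  [/\ P 0, ~ P 1,
      (forall a b, P a -> P b -> P (a + b)),
      (forall r a, P a -> P (r * a)) &
      (forall a b, P (a * b) -> P a \/ P b)].

(* P \in Ass(A/J): P is prime and P = Ann_A(f + J) for some f in A *)
Definition Ass (A : comNzRingType) (J : A -> Prop) (P : A -> Prop) : Prop :=
  prime_ideal P /\ exists f : A, forall g, P g <-> J (g * f).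

Definition edge_ideal (K : fieldType) (n : nat) (e : rel 'I_n) : mpoly K n -> Prop :=
  ideal_gen (fun g => exists i j : 'I_n, e i j /\ g = x_ K i * x_ K j).

Definition simple_graph (n : nat) (e : rel 'I_n) : Prop :=
  symmetric e /\ irreflexive e.

Definition has_leaf (n : nat) (e : rel 'I_n) : Prop :=
  exists v : 'I_n, #|[set u | e v u]| = 1%N.

(* Let v be a leaf with neighbour u.  Then I^(t+1) : x_u x_v = I^t, so f + I^t and
   x_u x_v f + I^(t+1) have the same annihilator.  For the other, write g x_u x_v as a combination of products of t+1
   edges and divide it by x_v, then by x_u; since v is a leaf, x_v only occurs in
   edges {u,v}.  A product containing an edge {u,v} loses exactly that edge.  If
   instead x_u is taken from an edge {u,w}, the x_v is taken from a later edge
   {u,v}, whose leftover x_u joins x_w into a new edge {u,w}.  In every case at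
   least t edges survive. *)
From mathcomp Require Import all_boot all_algebra ring.
Set Implicit Arguments. Unset Strict Implicit. Unset Printing Implicit Defensive.
Import GRing.Theory.
Local Open Scope ring_scope.

Section DivideByVariable.
Variable R : comNzRingType.

(* Division by x_w, discarding the monomials not divisible by x_w: additive, but
   multiplicative only against the other variables. *)
Fixpoint mdivX (n w : nat) : mpoly R n -> mpoly R n :=
  match n return mpoly R n -> mpoly R n with
  | 0 => fun _ => 0
  | n'.+1 => fun p : {poly mpoly R n'} =>
      if w == n' then \poly_(i < size p) p`_i.+1
      else \poly_(i < size p) mdivX w p`_i
  end.
Arguments mdivX n w : clear implicits.

Lemma mdivX0 n w : mdivX n w 0 = 0.
Proof.
elim: n => [|n IH] //=.
by case: ifP => _; apply/polyP => i; rewrite coef_poly !coef0 ?IH; case: ifP.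
Qed.

Lemma coef_mdivX n w (p : {poly mpoly R n}) i :
  (mdivX n.+1 w p)`_i = if w == n then p`_i.+1 else mdivX n w p`_i.
Proof.
rewrite /=; case: ifP => _; rewrite coef_poly; case: ltnP => // lep.
  by rewrite nth_default // (leq_trans lep).
by rewrite nth_default // mdivX0.
Qed.

Lemma mdivXD n w (p q : mpoly R n) : mdivX n w (p + q) = mdivX n w p + mdivX n w q.
Proof.
elim: n w p q => [|n IH] w p q /=; first by rewrite addr0.
by apply/polyP => i; rewrite coefD !coef_mdivX; case: ifP => _; rewrite coefD // IH.
Qed.

Lemma mdivX_sum n w I (r : seq I) (F : I -> mpoly R n) :
  mdivX n w (\sum_(i <- r) F i) = \sum_(i <- r) mdivX n w (F i).
Proof. by elim: r => [|i r IH]; rewrite ?big_nil ?mdivX0 // !big_cons mdivXD IH. Qed.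

Lemma mdivX_mulX n w (p : mpoly R n) : (w < n)%N -> mdivX n w (p * mvar R n w) = p.
Proof.
elim: n w p => [|n IH] w p // ltwn; rewrite [mvar _ _ _]/=.
case: ifP => wn; apply/polyP => i; rewrite coef_mdivX wn; first by rewrite coefMX.
by rewrite coefMC IH //; move: ltwn; rewrite ltnS leq_eqVlt wn.
Qed.

Lemma mdivX_mulX_neq n w i (p : mpoly R n) : i != w ->
  mdivX n w (p * mvar R n i) = mdivX n w p * mvar R n i.
Proof.
elim: n w i p => [|n IH] w i p neq_iw; first by rewrite /= mul0r.
rewrite [mvar _ _ _]/=.
have [wn | nwn] := eqVneq w n.
  have -> : (i == n) = false by rewrite -wn (negbTE neq_iw).
  by apply/polyP => j; rewrite !(coef_mdivX, coefMC) wn eqxx.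
case: ifP => _; apply/polyP => j; rewrite coef_mdivX (negbTE nwn).
  by rewrite !coefMX coef_mdivX (negbTE nwn); case: (j == 0%N); rewrite ?mdivX0.
by rewrite !coefMC coef_mdivX (negbTE nwn) IH.
Qed.
End DivideByVariable.

Section IdealGen.
Variable A : comNzRingType.
Implicit Types S : A -> Prop.

Lemma ideal_gen_sub S x : S x -> ideal_gen S x.
Proof.
move=> Sx; exists [:: (1, x)]; split; last by rewrite big_seq1 mul1r.
by move=> p; rewrite inE => /eqP ->.
Qed.

Lemma ideal_gen0 S : ideal_gen S 0.
Proof. by exists [::]; rewrite big_nil. Qed.

Lemma ideal_genD S x y : ideal_gen S x -> ideal_gen S y -> ideal_gen S (x + y).
Proof.
move=> [s1 [S1 ->]] [s2 [S2 ->]]; exists (s1 ++ s2); split; last by rewrite big_cat.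
by move=> p; rewrite mem_cat => /orP [] ?; [apply: S1 | apply: S2].
Qed.

Lemma ideal_genMl S r x : ideal_gen S x -> ideal_gen S (r * x).
Proof.
move=> [s [Ss ->]]; exists [seq (r * p.1, p.2) | p <- s]; split.
  by move=> _ /mapP [q sq ->] /=; apply: Ss.
by rewrite big_map mulr_sumr; apply: eq_bigr => q _; rewrite mulrA.
Qed.

Lemma ideal_gen_sum S (I : eqType) (r : seq I) (F : I -> A) :
  (forall i, i \in r -> ideal_gen S (F i)) -> ideal_gen S (\sum_(i <- r) F i).
Proof.
elim: r => [|i r IH] Sr; first by rewrite big_nil; apply: ideal_gen0.
rewrite big_cons; apply: ideal_genD; first by apply: Sr; rewrite mem_head.
by apply: IH => j rj; apply: Sr; rewrite in_cons rj orbT.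
Qed.

Lemma ideal_gen_mono S S' x : (forall z, S z -> S' z) ->
  ideal_gen S x -> ideal_gen S' x.
Proof. by move=> SS' [s [Ss ->]]; exists s; split => // p sp; apply/SS'/Ss. Qed.

Lemma ideal_genM S1 S2 x y : ideal_gen S1 x -> ideal_gen S2 y ->
  ideal_gen (fun z => exists a b, [/\ S1 a, S2 b & z = a * b]) (x * y).
Proof.
move=> [s1 [S1s ->]] [s2 [S2s ->]].
rewrite mulr_suml; apply: ideal_gen_sum => p s1p; rewrite -mulrA; apply: ideal_genMl.
rewrite mulr_sumr; apply: ideal_gen_sum => q s2q; rewrite mulrCA; apply: ideal_genMl.
by apply: ideal_gen_sub; exists p.2, q.2; split; [apply: S1s | apply: S2s |].
Qed.

Lemma ideal_gen_prods0 S x : ideal_gen (prods S 0) x.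
Proof. by rewrite -[x]mulr1; apply/ideal_genMl/ideal_gen_sub. Qed.

Lemma ideal_gen_prodsMr S t x a : ideal_gen (prods S t) x -> S a ->
  ideal_gen (prods S t.+1) (x * a).
Proof.
move=> Jx Sa; rewrite mulrC.
apply: ideal_gen_mono (ideal_genM (ideal_gen_sub Sa) Jx).
by move=> z [a' [b [Sa' Pb ->]]]; exists a', b.
Qed.

Lemma prods_ideal_gen S t y : prods (ideal_gen S) t y -> ideal_gen (prods S t) y.
Proof.
elim: t y => [|t IH] y /=; first by move->; apply: ideal_gen_sub.
move=> [a [b [Ia [Pb ->]]]]; rewrite mulrC.
apply: ideal_gen_mono (ideal_genM (IH _ Pb) Ia).
by move=> z [b' [a' [Pb' Sa' ->]]]; exists a', b'; rewrite mulrC.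
Qed.

Lemma ideal_pow_gen S t x : ideal_pow (ideal_gen S) t x <-> ideal_gen (prods S t) x.
Proof.
split=> [[s [Ps ->]]|].
  by apply: ideal_gen_sum => p sp; apply/ideal_genMl/prods_ideal_gen/Ps.
apply: ideal_gen_mono => z; elim: t z => [|t IH] z //= [a [b [Sa [Pb ->]]]].
by exists a, b; split; [apply: ideal_gen_sub | split; first apply: IH].
Qed.

Lemma Ass_colon (J J' : A -> Prop) (m : A) :
  (forall g, J' (g * m) <-> J g) -> forall P, Ass J P -> Ass J' P.
Proof.
move=> colonJ P [primeP [f annP]]; split=> //; exists (m * f) => g.
by rewrite (annP g) -colonJ mulrA mulrAC.
Qed.

End IdealGen.

Section LeafColon.
Variables (R : comNzRingType) (n : nat) (e : rel 'I_n).
Hypothesis e_sym : symmetric e.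
Variables (v u : 'I_n).
Hypotheses (e_vu : e v u) (leaf_v : forall j, e v j -> j = u).

Let X (i : 'I_n) : mpoly R n := x_ R i.
Let S (g : mpoly R n) : Prop := exists i j : 'I_n, e i j /\ g = X i * X j.
Let J (t : nat) : mpoly R n -> Prop := ideal_gen (prods S t).
Let divX (w : 'I_n) : mpoly R n -> mpoly R n := @mdivX R n w.

Lemma divX_mulX w p : divX w (p * X w) = p.
Proof. exact: mdivX_mulX (ltn_ord w). Qed.

Lemma divX_mulX_neq w i p : i != w -> divX w (p * X i) = divX w p * X i.
Proof. exact: mdivX_mulX_neq. Qed.

Lemma leaf_edge_cases i j : e i j -> X i * X j = X u * X v \/ (i != v /\ j != v).
Proof.
move=> e_ij; have [iv | niv] := eqVneq i v.
  by left; rewrite iv (leaf_v (_ : e v j)) -?iv // mulrC.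
have [jv | njv] := eqVneq j v; last by right.
by left; rewrite jv (leaf_v (_ : e v i)) // e_sym -jv.
Qed.

Lemma divX_leaf_mul_nbr m b c w : prods S m b -> e u w -> J m (divX v (c * b) * X w).
Proof.
elim: m b c => [|m IH] b c; first by move=> *; apply: ideal_gen_prods0.
move=> [_ [b' [[i [j [e_ij ->]]] [Pb' ->]]]] e_uw.
have [-> | [niv njv]] := leaf_edge_cases e_ij.
  rewrite [_ * b']mulrC !mulrA divX_mulX -mulrA.
  apply: ideal_gen_prodsMr; last by exists u, w.
  by apply/ideal_genMl/ideal_gen_sub.
rewrite [_ * b']mulrC !mulrA !(divX_mulX_neq (w := v)) //.
rewrite (_ : _ * X w = divX v (c * b') * X w * (X i * X j)); last by ring.
by apply: ideal_gen_prodsMr; [apply: IH | exists i, j].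
Qed.

Lemma divX_leaf_nbr_prods k p c : prods S k.+1 p -> J k (divX u (divX v (c * p))).
Proof.
elim: k p c => [|k IH] p c; first by move=> *; apply: ideal_gen_prods0.
move=> [_ [b [[i [j [e_ij ->]]] [Pb ->]]]].
have [-> | [niv njv]] := leaf_edge_cases e_ij.
  by rewrite [_ * b]mulrC !mulrA !divX_mulX; apply/ideal_genMl/ideal_gen_sub.
rewrite [_ * b]mulrC !mulrA !(divX_mulX_neq (w := v)) //.
case: (eqVneq i u) e_ij => [-> | niu] e_ij.
  by rewrite mulrAC divX_mulX; exact: (@divX_leaf_mul_nbr k.+1 b c j Pb e_ij).
case: (eqVneq j u) e_ij => [-> | nju] e_ij.
  by rewrite divX_mulX; apply: (@divX_leaf_mul_nbr k.+1 b c i Pb); rewrite e_sym.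
rewrite !(divX_mulX_neq (w := u)) // -mulrA.
by apply: ideal_gen_prodsMr; [apply: IH | exists i, j].
Qed.

Lemma leaf_colon t g : J t.+1 (g * (X u * X v)) <-> J t g.
Proof.
split=> [[s [Ps gE]] | Jg]; last first.
  by apply: ideal_gen_prodsMr Jg _; exists u, v; rewrite e_sym.
rewrite -[g](divX_mulX u) -[g * X u](divX_mulX v) -mulrA gE /divX !mdivX_sum.
by apply: ideal_gen_sum => p sp; apply/divX_leaf_nbr_prods/Ps.
Qed.

End LeafColon.

Theorem proposition4p20 (K : fieldType) (n : nat) (e : rel 'I_n) :
  simple_graph e -> has_leaf e ->
  forall t : nat, (1 <= t)%N ->
  forall P : mpoly K n -> Prop,
    Ass (ideal_pow (@edge_ideal K n e) t) P ->
    Ass (ideal_pow (@edge_ideal K n e) t.+1) P.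
Proof.
move=> [e_sym _] [v deg_v] t _.
have [u nbr_v] : exists u, [set j | e v j] = [set u] by apply/cards1P; rewrite deg_v.
have e_vu : e v u by have := set11 u; rewrite -nbr_v inE.
have leaf_v j : e v j -> j = u by move=> e_vj; apply/set1P; rewrite -nbr_v inE.
apply: (Ass_colon (m := x_ K u * x_ K v)) => g.
by rewrite /edge_ideal !ideal_pow_gen; apply: leaf_colon.
Qed.
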